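(* Let $m\ge 2$ and let $n_1,\dots,n_m\ge 3$ be odd integers. Then the partition dimension of the odd chain cycle $\mathcal{C}(C_{n_1},\dots,C_{n_m})$ equals $3$.
   Context: Let $C_{n_1},\dots,C_{n_m}$ be pairwise disjoint cycles, $V(C_{n_i})=\{v^i_1,\dots,v^i_{n_i}\}$ with $v^i_j$ adjacent to $v^i_{j+1}$ (indices mod $n_i$). The odd chain cycle $\mathcal{C}(C_{n_1},\dots,C_{n_m})$ (all $n_i$ odd) is obtained from the disjoint union of these cycles by identifying $v^i_{(n_i+1)/2+1}$ with $v^{i+1}_1$ for each $i=1,\dots,m-1$. For an ordered partition $\Pi=\{Q_1,\dots,Q_k\}$ of $V(G)$, $r(v\mid\Pi)=(d(v,Q_1),\dots,d(v,Q_k))$ where $d(v,Q)=\min_{q\in Q}d(v,q)$; $\Pi$ is resolving if distinct vertices have distinct representations; the partition dimension $pd(G)$ is the minimum $k$ for which a resolving $k$-partition exists. *)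

From mathcomp Require Import all_boot.
Set Implicit Arguments. Unset Strict Implicit. Unset Printing Implicit Defensive.

Section GraphNotions.
Variables (T : finType) (e : rel T).

Fixpoint reach (k : nat) (x y : T) : bool :=
  if k is k'.+1 then reach k' x y || [exists z, e x z && reach k' z y]
  else x == y.

(* graph distance: the least k with a walk of length <= k from x to y.
   (Every distance in a connected graph is < #|T|; for unreachable
   pairs this returns #|T|.+1, which never happens for connected graphs.) *)
Definition dist (x y : T) : nat :=
  find (fun k => reach k x y) (iota 0 #|T|.+1).

Definition dist_set (v : T) (Q : {set T}) : nat :=
  \big[minn/#|T|.+1]_(q in Q) dist v q.

Definition is_ordered_partition (k : nat) (Pi : 'I_k -> {set T}) : Prop :=
  (forall i, Pi i != set0) /\
  (forall i j, i != j -> [disjoint Pi i & Pi j]) /\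
  (forall v : T, exists i, v \in Pi i).

Definition repr_vec (k : nat) (Pi : 'I_k -> {set T}) (v : T) : k.-tuple nat :=
  [tuple dist_set v (Pi i) | i < k].

Definition resolving (k : nat) (Pi : 'I_k -> {set T}) : Prop :=
  forall u v : T, repr_vec Pi u = repr_vec Pi v -> u = v.

Definition has_resolving_partition (k : nat) : Prop :=
  exists Pi : 'I_k -> {set T}, is_ordered_partition Pi /\ resolving Pi.

Definition partition_dimension_is (k : nat) : Prop :=
  has_resolving_partition k /\
  (forall k', k' < k -> ~ has_resolving_partition k').

End GraphNotions.

(* ---------- The odd chain cycle C(C_{n_1},...,C_{n_m}) ----------
   0-indexed: cycle i (0 <= i < m) has length n i and vertices (i, j),
   0 <= j < n i, with (i, j) ~ (i, (j+1) mod n i).  The paper's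
   identification of v^i_{(n_i+1)/2+1} with v^{i+1}_1 becomes, 0-indexed,
   (i, (n i + 1)/2) == (i+1, 0) for i+1 < m.  We use as representatives
   all pairs except (i, 0) with i > 0. *)
Section OddChain.
Variables (m : nat) (n : nat -> nat).

Definition chain_N := \max_(i < m) n i.

Definition chain_valid (p : nat * nat) : bool :=
  (p.1 < m) && (p.2 < n p.1) && ~~ ((p.2 == 0) && (0 < p.1)).

Definition chain_canon (i j : nat) : nat * nat :=
  if (j == 0) && (0 < i) then (i.-1, (n i.-1).+1 %/ 2) else (i, j).

Definition chain_vertex : Type :=
  {p : 'I_m * 'I_chain_N | chain_valid (nat_of_ord p.1, nat_of_ord p.2)}.

Definition chain_pair (v : chain_vertex) : nat * nat :=
  (nat_of_ord (val v).1, nat_of_ord (val v).2).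

Definition chain_edge : rel chain_vertex := fun u v =>
  [exists i : 'I_m, exists j : 'I_chain_N,
     (j < n i) &&
     (((chain_canon i j == chain_pair u) &&
       (chain_canon i ((j.+1) %% n i) == chain_pair v)) ||
      ((chain_canon i j == chain_pair v) &&
       (chain_canon i ((j.+1) %% n i) == chain_pair u)))].

End OddChain.

(* Let x = v^1_1 be the first vertex of the first cycle and y
   the vertex v^m_{(n_m+1)/2+1} of the last cycle, where a further cycle would
   be attached.  Both d(v, x) and d(v, y) have a closed form: the sum of the
   half-lengths of the cycles passed on the way, plus a cyclic distance inside
   the cycle of v.  To verify such a formula we use that a nat-valued function
   vanishing only at x, dropping by at most one along edges and decreasable
   along some edge at every other vertex is the distance to x
   ([dist_potential]).  The pair (d(v, x), d(v, y)) determines v, so {x}, {y}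
   and the remaining vertices form a resolving 3-partition.

   One class cannot separate two vertices; with two classes, a
   vertex has at most three neighbours (their representations are (1, 0),
   (0, d - 1) or (0, d + 1)), while the cut vertex between the first two
   cycles has four. *)

From HB Require Import structures.
From mathcomp Require Import all_boot zify.
Set Implicit Arguments. Unset Strict Implicit. Unset Printing Implicit Defensive.

(* [minn] is associative and commutative; this lets [big_rem_AC] split a
   minimum over a set. *)
HB.instance Definition _ := SemiGroup.isComLaw.Build nat minn minnA minnC.

Section Distance.
Variables (T : finType) (e : rel T).

Definition edge_lipschitz (phi : T -> nat) : Prop :=
  forall u w, e u w -> phi u <= (phi w).+1.

Definition edge_descending (phi : T -> nat) : Prop :=
  forall v, 0 < phi v -> exists2 w, e v w & phi w = (phi v).-1.

Lemma dist_le x y k : k <= #|T| -> reach e k x y -> dist e x y <= k.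
Proof.
move=> kT rk; rewrite leqNgt; apply/negP => /(before_find 0).
by rewrite nth_iota ?add0n ?rk //; lia.
Qed.

Lemma dist_reach x y : dist e x y <= #|T| -> reach e (dist e x y) x y.
Proof.
move=> dT; have has_r : has (fun k => reach e k x y) (iota 0 #|T|.+1).
  by rewrite has_find size_iota ltnS.
by have := nth_find 0 has_r; rewrite nth_iota ?add0n //; lia.
Qed.

Lemma dist_max x y : dist e x y <= #|T|.+1.
Proof. by rewrite /dist -[X in _ <= X](size_iota 0 #|T|.+1) find_size. Qed.

Lemma reach_step k x z y : e x z -> reach e k z y -> reach e k.+1 x y.
Proof. by move=> xz zy /=; apply/orP; right; apply/existsP; exists z; rewrite xz. Qed.

Lemma dist_refl x : dist e x x = 0.
Proof. by apply/eqP; rewrite -leqn0; apply: dist_le => /=. Qed.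

Lemma dist_eq0 x y : dist e x y = 0 -> x = y.
Proof. by move=> d0; have := @dist_reach x y; rewrite d0 /= => /(_ isT) /eqP. Qed.

Lemma dist_lipschitz q : edge_lipschitz (dist e ^~ q).
Proof.
move=> b a ba; have [aT|aT] := leqP (dist e a q) #|T|; last by have := dist_max b q; lia.
have [aT'|aT'] := leqP (dist e a q).+1 #|T|; last by have := dist_max b q; lia.
exact/dist_le/(reach_step ba)/dist_reach.
Qed.

Section Potential.
Variables (phi : T -> nat) (x : T).
Hypotheses (phi_x : phi x = 0) (phi_eq0 : forall v, phi v = 0 -> v = x)
  (phi_lip : edge_lipschitz phi) (phi_desc : edge_descending phi).

Lemma reach_potential k v : reach e k v x -> phi v <= k.
Proof.
elim: k v => [|k IH] v /=; first by move/eqP->; rewrite phi_x.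
case/orP => [/IH|/existsP [w /andP [vw /IH]]]; first lia.
by have := phi_lip vw; lia.
Qed.

Lemma potential_reach k v : phi v = k -> reach e k v x.
Proof.
elim: k v => [|k IH] v pv; first by rewrite (phi_eq0 pv) /=.
have [w vw pw] := phi_desc (ltac:(lia) : 0 < phi v).
by apply: (reach_step vw); apply: IH; lia.
Qed.

(* All values below [phi v] are attained, so [phi v] is less than [#|T|]. *)
Lemma potential_values p v k : phi v = p -> k <= p -> k \in codom phi.
Proof.
elim: p v => [|p IH] v pv kp; first by apply/codomP; exists v; lia.
have [->|kp'] := eqVneq k p.+1; first by apply/codomP; exists v.
have [w _ pw] := phi_desc (ltac:(lia) : 0 < phi v).
by apply: (IH w); lia.
Qed.

Lemma potential_lt_card v : phi v < #|T|.
Proof.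
rewrite -(size_codom phi) -(size_iota 0 (phi v).+1).
apply: uniq_leq_size (iota_uniq _ _) _ => k.
by rewrite mem_iota add0n ltnS => /andP [_]; apply: potential_values.
Qed.

Lemma dist_potential v : dist e v x = phi v.
Proof.
have lt := potential_lt_card v.
have le : dist e v x <= phi v by apply: dist_le (potential_reach (erefl _)); lia.
by have := reach_potential (dist_reach (ltac:(lia) : dist e v x <= #|T|)); lia.
Qed.

End Potential.

Lemma dist_set_le (Q : {set T}) v q : q \in Q -> dist_set e v Q <= dist e v q.
Proof.
by move=> qQ; rewrite /dist_set (big_rem_AC _ _ _ _ (mem_index_enum q)) qQ geq_minl.
Qed.

Lemma dist_set_max (Q : {set T}) v : dist_set e v Q <= #|T|.+1.
Proof.
rewrite /dist_set; elim/big_ind: _ => // [a b ha _|q _]; last exact: dist_max.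
by rewrite geq_min ha.
Qed.

Lemma dist_set_ge (Q : {set T}) v c : c <= #|T|.+1 ->
  (forall q, q \in Q -> c <= dist e v q) -> c <= dist_set e v Q.
Proof.
by move=> cT cQ; rewrite /dist_set; elim/big_ind: _ => // a b ca cb; rewrite leq_min ca.
Qed.

Lemma dist_set_eq0 (Q : {set T}) v : (dist_set e v Q == 0) = (v \in Q).
Proof.
apply/idP/idP => [/eqP d0|vQ]; last by rewrite -leqn0 -(dist_refl v) dist_set_le.
apply: contraT => vQ; suff : 0 < dist_set e v Q by rewrite d0.
apply: dist_set_ge => // q qQ; rewrite lt0n; apply: contraNneq vQ => /dist_eq0 ->.
by rewrite qQ.
Qed.

Lemma dist_set_lipschitz (Q : {set T}) : edge_lipschitz (dist_set e ^~ Q).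
Proof.
move=> b a ba; suff : (dist_set e b Q).-1 <= dist_set e a Q by lia.
apply: dist_set_ge => [|q qQ]; first by have := dist_set_max Q b; lia.
by have := dist_set_le b qQ; have := @dist_lipschitz q _ _ ba; lia.
Qed.

Lemma dist_set1 v x : dist_set e v [set x] = dist e v x.
Proof.
apply/eqP; rewrite eqn_leq dist_set_le ?set11 //.
by apply: dist_set_ge => [|q /set1P ->]; first exact: dist_max.
Qed.

Lemma repr_vecP k (Pi : 'I_k -> {set T}) u v :
  reflect (forall i, dist_set e u (Pi i) = dist_set e v (Pi i))
          (repr_vec e Pi u == repr_vec e Pi v).
Proof.
apply: (iffP eqP) => [E i|E]; last by apply: eq_from_tnth => i; rewrite !tnth_mktuple.
by have := congr1 (fun t => tnth t i) E; rewrite !tnth_mktuple.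
Qed.

End Distance.

Lemma ord2_other (i0 : 'I_2) : exists2 j0 : 'I_2, i0 != j0 & forall i : 'I_2, i = i0 \/ i = j0.
Proof.
case: i0 => [[|[|//]] ?]; [exists (@Ordinal 2 1 isT) | exists ord0] => //;
  case=> [[|[|//]] ?]; by [left; apply: val_inj | right; apply: val_inj].
Qed.

Section LowerBounds.
Variables (T : finType) (e : rel T).

Definition open_nbhd (a : T) : simpl_pred T := [pred b | e a b && (b != a)].

Lemma no_resolving_partition0 (x : T) : ~ has_resolving_partition e 0.
Proof. by case=> Pi [[_ [_ /(_ x) [[]]]]]. Qed.

(* With a single class every vertex is represented by [(0)]. *)
Lemma no_resolving_partition1 (x y : T) : x != y -> ~ has_resolving_partition e 1.
Proof.
move=> xy [Pi [[_ [_ cover]] res]].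
have in_class v i : v \in Pi i by have [j vj] := cover v; rewrite (ord1 i) -(ord1 j).
apply/negP: xy; apply/negPn/eqP/res/eqP/repr_vecP => i.
by move: (in_class x i) (in_class y i); rewrite -!(dist_set_eq0 e) => /eqP-> /eqP->.
Qed.

(* In a symmetric graph, a resolving 2-partition forces every vertex to have
   at most three neighbours: a neighbour lying in the other class is
   represented by (1, 0), and one in the same class by (0, d - 1) or (0, d + 1),
   where d is the distance of [a] to the other class. *)
Section TwoClasses.
Hypothesis e_sym : symmetric e.
Variables (Pi : 'I_2 -> {set T}) (i0 j0 : 'I_2) (a : T).
Hypotheses (Pi_part : is_ordered_partition Pi) (Pi_res : resolving e Pi).
Hypotheses (i0_j0 : forall i, i = i0 \/ i = j0) (a_i0 : a \in Pi i0).

Local Notation d i v := (dist_set e v (Pi i)).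

Lemma resolving2_same_repr u v : d i0 u = d i0 v -> d j0 u = d j0 v -> u = v.
Proof. by move=> E0 E1; apply/Pi_res/eqP/repr_vecP => i; case: (i0_j0 i) => ->. Qed.

Lemma resolving2_nbhd_repr b : b \in open_nbhd a ->
  if b \in Pi i0 then d i0 b = 0 /\ ((d j0 b).+1 = d j0 a \/ d j0 b = (d j0 a).+1)
  else d i0 b = 1 /\ d j0 b = 0.
Proof.
rewrite inE => /andP [ab ba].
have ba' : e b a by rewrite e_sym.
have da : d i0 a = 0 by apply/eqP; rewrite dist_set_eq0.
have := dist_set_lipschitz (Pi i0) ba'; have := dist_set_lipschitz (Pi j0) ba'.
have := dist_set_lipschitz (Pi j0) ab; rewrite da.
case: ifPn => [bi0 l1 l2 l3|bi0 _ _ l3].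
  have db : d i0 b = 0 by apply/eqP; rewrite dist_set_eq0.
  suff : d j0 b != d j0 a by lia.
  by apply: contra_neq ba => /(resolving2_same_repr (etrans db (esym da))).
have [[i bi] [_ [disj _]]] := (proj2 (proj2 Pi_part) b, Pi_part).
case: (i0_j0 i) bi => -> bi; first by rewrite bi in bi0.
have /eqP -> : d j0 b == 0 by rewrite dist_set_eq0.
by split=> //; move: bi0; rewrite -(dist_set_eq0 e); lia.
Qed.

Lemma resolving2_degree : #|open_nbhd a| <= 3.
Proof.
pose code b : option bool := if b \in Pi i0 then Some (d j0 b < d j0 a) else None.
suff inj : {in open_nbhd a &, injective code}.
  by have := @leq_card_in _ _ code _ inj; rewrite card_option card_bool.
move=> b b' /resolving2_nbhd_repr hb /resolving2_nbhd_repr hb'; rewrite /code.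
move: hb hb'; case: ifP => _; case: ifP => _ // [db hb] [db' hb'];
  last by move=> _; apply: resolving2_same_repr; lia.
by case=> same_side; apply: resolving2_same_repr; lia.
Qed.

End TwoClasses.

Lemma no_resolving_partition2 (a : T) : symmetric e -> 3 < #|open_nbhd a| ->
  ~ has_resolving_partition e 2.
Proof.
move=> e_sym deg [Pi [part res]].
have [i0 ai0] := proj2 (proj2 part) a; have [j0 _ cover2] := ord2_other i0.
by have := resolving2_degree e_sym part res cover2 ai0; lia.
Qed.

Lemma landmarks_resolving (x y z : T) : x != y -> z != x -> z != y ->
  (forall u v, dist e u x = dist e v x -> dist e u y = dist e v y -> u = v) ->
  has_resolving_partition e 3.
Proof.
move=> xy zx zy sep.
pose Pi (k : 'I_3) := nth set0 [:: [set x]; [set y]; ~: [set x; y]] k.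
exists Pi; split; [split; [|split]|].
- case=> [[|[|[|//]]] ?]; apply/set0Pn; [exists x|exists y|exists z];
    by rewrite /Pi /= !inE ?eqxx // negb_or zx zy.
- case=> [[|[|[|//]]] ?] [[|[|[|//]]] ?] //= _; rewrite -setI_eq0; apply/eqP/setP => v;
    rewrite /Pi /= !inE; have [->|_] := eqVneq v x;
    by rewrite ?eqxx ?(negbTE xy) ?andbF ?andbN ?andNb.
- move=> v; have [->|vx] := eqVneq v x; first by exists (@Ordinal 3 0 isT); rewrite /Pi /= inE.
  have [->|vy] := eqVneq v y; first by exists (@Ordinal 3 1 isT); rewrite /Pi /= inE.
  by exists (@Ordinal 3 2 isT); rewrite /Pi /= !inE negb_or vx vy.
- move=> u v /eqP/repr_vecP E; apply: sep; rewrite -!dist_set1.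
    exact: (E (@Ordinal 3 0 isT)).
  exact: (E (@Ordinal 3 1 isT)).
Qed.

End LowerBounds.

Definition cdist (N j k : nat) := minn ((j - k) + (k - j)) (N - ((j - k) + (k - j))).

Definition cycle_adj (N j j' : nat) : Prop := j = j'.+1 %% N \/ j' = j.+1 %% N.

Lemma succ_mod N j : j < N -> j.+1 %% N = if j.+1 == N then 0 else j.+1.
Proof.
move=> jN; case: eqP => [->|ne]; first by rewrite modnn.
by rewrite modn_small //; lia.
Qed.

Section CycleDistance.
Variables (t N : nat).
Hypotheses (t_pos : 0 < t) (N_odd : N = t.*2.+1).

Lemma cdist_le_half j k : j < N -> k < N -> cdist N j k <= t.
Proof. rewrite /cdist; lia. Qed.

Lemma cdist_eq0 j k : j < N -> k < N -> (cdist N j k == 0) = (j == k).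
Proof. rewrite /cdist; lia. Qed.

Lemma cdist_succ j k : j < N -> k < N ->
  cdist N (j.+1 %% N) k <= (cdist N j k).+1 /\ cdist N j k <= (cdist N (j.+1 %% N) k).+1.
Proof. by move=> jN kN; rewrite succ_mod //; case: ifP; rewrite /cdist; lia. Qed.

Lemma cdist_start j : j < N -> cdist N j 0 = if j <= t then j else N - j.
Proof. by move=> jN; case: leqP; rewrite /cdist; lia. Qed.

Lemma cdist_gate j : j < N ->
  cdist N j t.+1 = if j == 0 then t else if j <= t then t.+1 - j else j - t.+1.
Proof. by move=> jN; case: eqP => [->|j0]; [|case: leqP]; rewrite /cdist; lia. Qed.

Lemma cdist_inj j j' : j < N -> j' < N ->
  cdist N j 0 = cdist N j' 0 -> cdist N j t.+1 = cdist N j' t.+1 -> j = j'.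
Proof.
move=> jN j'N; rewrite !cdist_start // !cdist_gate //.
by case: leqP => ?; case: leqP => ?; case: eqP => ?; case: eqP => ?; lia.
Qed.

(* Closed forms of the cyclic distance, below and above half a turn; they keep
   the arithmetic goals below free of [minn]. *)
Lemma cdist_near j k : (j - k) + (k - j) <= t -> cdist N j k = (j - k) + (k - j).
Proof. rewrite /cdist; lia. Qed.

Lemma cdist_far j k : j < N -> k < N -> t < (j - k) + (k - j) ->
  cdist N j k = N - ((j - k) + (k - j)).
Proof. rewrite /cdist; lia. Qed.

(* Every position other than [k] has a cycle neighbour one step closer to [k]:
   step forward when [k] is less than half a turn ahead, backward otherwise. *)
Lemma cdist_desc j k : j < N -> k < N -> 0 < cdist N j k ->
  exists2 j', j' < N & cycle_adj N j j' /\ cdist N j' k = (cdist N j k).-1.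
Proof.
move=> jN kN; rewrite lt0n cdist_eq0 // => jk.
have fwd : cdist N (j.+1 %% N) k = (cdist N j k).-1 ->
    exists2 j', j' < N & cycle_adj N j j' /\ cdist N j' k = (cdist N j k).-1.
  by exists (j.+1 %% N); [rewrite ltn_pmod; lia | split; [right|]].
have bwd j' : j' < N -> j = j'.+1 %% N -> cdist N j' k = (cdist N j k).-1 ->
    exists2 j', j' < N & cycle_adj N j j' /\ cdist N j' k = (cdist N j k).-1.
  by move=> j'N j_succ dec; exists j'; [|split; [left|]].
have [le_jk|lt_kj] := leqP j k.
- have [near|far] := leqP (k - j) t.
  + by apply: fwd => {bwd}; rewrite succ_mod // ifN; [rewrite !cdist_near|]; lia.
  + case: j {fwd} jN jk le_jk far bwd => [|j] jN jk le_jk far bwd.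
      apply: (bwd N.-1) => {bwd}; [lia|rewrite prednK ?modnn; lia|].
      by rewrite (cdist_near (j := N.-1)) ?cdist_far; lia.
    by apply: (bwd j) => {bwd}; [lia|rewrite modn_small|rewrite !cdist_far]; lia.
- have [near|far] := leqP (j - k) t.
  + case: j {fwd} jN jk lt_kj near bwd => [|j] jN jk lt_kj near bwd; first lia.
    by apply: (bwd j) => {bwd}; [lia|rewrite modn_small|rewrite !cdist_near]; lia.
  + apply: fwd => {bwd}; rewrite succ_mod //; case: eqP => [wrap|no_wrap].
      by rewrite (cdist_near (j := 0)) ?cdist_far; lia.
    by rewrite !cdist_far; lia.
Qed.
End CycleDistance.

Section Chain.
Variables (m : nat) (n : nat -> nat).
Hypotheses (m_ge2 : 2 <= m) (n_odd : forall i, i < m -> odd (n i) /\ 3 <= n i).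

Local Notation vertex := (chain_vertex m n).
Local Notation edge := (@chain_edge m n).
Local Notation canon := (chain_canon n).

(* Cycle [i] has [n i = 2 * half i + 1] vertices; its vertex of index
   [half i + 1 = (n i + 1) / 2] is identified with vertex 0 of cycle [i + 1]. *)
Definition half i := n i %/ 2.

Lemma n_half i : i < m -> n i = (half i).*2.+1.
Proof.
move=> im; have [odd_n _] := n_odd im.
by rewrite /half -[in LHS](odd_double_half (n i)) odd_n divn2 add1n.
Qed.

Lemma n_pos i : i < m -> 0 < n i.
Proof. by move=> im; have := n_odd im; lia. Qed.

Lemma half_pos i : i < m -> 0 < half i.
Proof. by move=> im; have := n_half im; have := n_odd im; lia. Qed.

Lemma gate_half i : i < m -> (n i).+1 %/ 2 = (half i).+1.
Proof. by move=> im; have := n_half im; lia. Qed.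

(* [offset i] is the distance from vertex (0, 0) to the entry vertex of cycle [i]. *)
Definition offset i := \sum_(0 <= k < i) half k.

Lemma offset0 : offset 0 = 0.
Proof. by rewrite /offset big_geq. Qed.

Lemma offsetS i : offset i.+1 = offset i + half i.
Proof. by rewrite /offset big_nat_recr. Qed.

Lemma offset_mono i k : i <= k -> offset i <= offset k.
Proof. by move=> ik; rewrite /offset (big_cat_nat (leq0n i) ik) leq_addr. Qed.

Lemma chain_pair_inj : injective (@chain_pair m n).
Proof.
case=> [[a b] ?] [[c d] ?]; rewrite /chain_pair /= => -[ac bd].
by apply: val_inj; congr pair; apply: val_inj.
Qed.

Lemma chain_coords (v : vertex) :
  exists i j, [/\ chain_pair v = (i, j), i < m, j < n i & ~~ ((j == 0) && (0 < i))].
Proof. by case: v => [[i j] V]; have /andP [/andP [im jn] nv] := V; exists i, j. Qed.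

Lemma canon_id i j : ~~ ((j == 0) && (0 < i)) -> canon i j = (i, j).
Proof. by rewrite /chain_canon => /negbTE ->. Qed.

Lemma lt_chain_N i j : i < m -> j < n i -> j < chain_N m n.
Proof.
move=> im jn; apply: leq_trans jn _.
by rewrite /chain_N (leq_bigmax_cond (F := n \o val) (Ordinal im)).
Qed.

Lemma chain_vertex_at i j : chain_valid m n (i, j) -> exists v : vertex, chain_pair v = (i, j).
Proof.
move=> V; have /andP [/andP [/= im jn] _] := V.
by exists (exist _ (Ordinal im, Ordinal (lt_chain_N im jn)) V).
Qed.

Lemma chain_vertex_canon i j : i < m -> j < n i -> exists v : vertex, chain_pair v = canon i j.
Proof.
move=> im jn; rewrite /chain_canon; case: ifP => [/andP [_ i0]|nv]; apply: chain_vertex_at.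
  have im' : i.-1 < m by lia.
  by rewrite /chain_valid /= im' gate_half //; have := n_half im'; have := half_pos im'; lia.
by rewrite /chain_valid /= im jn nv.
Qed.

Lemma chain_edge_sym : symmetric edge.
Proof.
move=> u w; apply/existsP/existsP => -[i /existsP [j ij]]; exists i;
  by apply/existsP; exists j; rewrite orbC.
Qed.

Lemma chain_edge_at i j (u w : vertex) : i < m -> j < n i ->
  chain_pair u = canon i j -> chain_pair w = canon i (j.+1 %% n i) -> edge u w.
Proof.
move=> im jn pu pw; apply/existsP; exists (Ordinal im).
apply/existsP; exists (Ordinal (lt_chain_N im jn)).
by rewrite /= jn pu pw !eqxx.
Qed.

Lemma chain_edgeP (u w : vertex) : edge u w -> exists i j, [/\ i < m, j < n i &
  (chain_pair u = canon i j /\ chain_pair w = canon i (j.+1 %% n i)) \/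
  (chain_pair w = canon i j /\ chain_pair u = canon i (j.+1 %% n i))].
Proof.
case/existsP => i /existsP [j /andP [jn /orP [] /andP [/eqP A /eqP B]]];
  by exists i, j; split; [| |by [left|right]].
Qed.

Definition cycle_pot (B K : nat -> nat) (p : nat * nat) := B p.1 + cdist (n p.1) p.2 (K p.1).

Section CyclePotential.
Variables (B K : nat -> nat).
Hypotheses (K_lt : forall i, i < m -> K i < n i)
  (pot_canon : forall i j, i < m -> j < n i -> cycle_pot B K (canon i j) = cycle_pot B K (i, j)).

Local Notation pot v := (cycle_pot B K (chain_pair v)).

Lemma cycle_pot_lipschitz : edge_lipschitz edge (fun v => pot v).
Proof.
move=> u w /chain_edgeP [i [j [im jn uw]]].
have := cdist_succ (half_pos im) (n_half im) jn (K_lt im).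
by case: uw => -[-> ->]; rewrite !pot_canon ?ltn_pmod //; rewrite /cycle_pot /=; lia.
Qed.

Lemma cycle_pot_descent (v : vertex) i j : chain_pair v = (i, j) -> 0 < cdist (n i) j (K i) ->
  exists2 w, edge v w & pot w = (pot v).-1.
Proof.
move=> pv pos; have [i' [j' [pv' im jn nv]]] := chain_coords v.
move: pv'; rewrite pv => -[ei ej]; subst i' j'.
have [j' j'n [adj dec]] := cdist_desc (half_pos im) (n_half im) jn (K_lt im) pos.
have [w pw] := chain_vertex_canon im j'n.
exists w; last by rewrite pw pot_canon // /cycle_pot /= dec; lia.
case: adj => [j_succ|j'_succ].
  by rewrite (chain_edge_sym v w); apply: (chain_edge_at im j'n pw); rewrite pv -j_succ canon_id.
by apply: (chain_edge_at im jn); [rewrite pv canon_id | rewrite pw j'_succ].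
Qed.

End CyclePotential.

(* The two landmark potentials: [pot_x] measures the distance to the first
   vertex (0, 0), [pot_y] the distance to the exit vertex of the last cycle. *)
Definition pot_x := cycle_pot offset (fun _ => 0).
Definition pot_y := cycle_pot (fun i => offset m - offset i.+1) (fun i => (n i).+1 %/ 2).

(* Both potentials take the same value on the two names of a cut vertex. *)
Lemma pot_x_canon i j : i < m -> j < n i -> pot_x (canon i j) = pot_x (i, j).
Proof.
move=> im jn; rewrite /chain_canon; case: ifP => // /andP [/eqP -> i0].
have im' : i.-1 < m by lia.
rewrite /pot_x /cycle_pot /= gate_half // -[in offset i](prednK i0) offsetS.
by have := n_half im'; rewrite /cdist; lia.
Qed.

Lemma pot_y_canon i j : i < m -> j < n i -> pot_y (canon i j) = pot_y (i, j).
Proof.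
move=> im jn; rewrite /chain_canon; case: ifP => // /andP [/eqP -> i0].
have im' : i.-1 < m by lia.
rewrite /pot_y /cycle_pot /= (prednK i0) !gate_half //.
by have := n_half im; have := offset_mono im; rewrite offsetS /cdist; lia.
Qed.

Lemma cdist_start_eq0 (v : vertex) i j : chain_pair v = (i, j) ->
  cdist (n i) j 0 = 0 -> (i, j) = (0, 0).
Proof.
have [i' [j' [-> im jn nv]]] := chain_coords v; case=> <- <- /eqP.
rewrite (cdist_eq0 (half_pos im) (n_half im) jn (n_pos im)) => /eqP j0.
by move: nv; rewrite j0 /= -eqn0Ngt => /eqP ->.
Qed.

Lemma dist_to_x (x : vertex) : chain_pair x = (0, 0) ->
  forall v, dist edge v x = pot_x (chain_pair v).
Proof.
move=> px; apply: dist_potential => [|v|u w|v pos].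
- by rewrite /= px /pot_x /cycle_pot /= offset0 /cdist; lia.
- have [i [j [pv _ _ _]]] := chain_coords v.
  rewrite pv /pot_x /cycle_pot /= => /eqP; rewrite addn_eq0 => /andP [_ /eqP c0].
  by apply: chain_pair_inj; rewrite pv px (cdist_start_eq0 pv c0).
- exact: (cycle_pot_lipschitz n_pos pot_x_canon).
- have [i [j [pv _ _ _]]] := chain_coords v.
  have [c0|c_pos] := posnP (cdist (n i) j 0); last exact: (cycle_pot_descent n_pos pot_x_canon pv).
  by move: pos => /=; rewrite pv (cdist_start_eq0 pv c0) /pot_x /cycle_pot /= offset0 /cdist; lia.
Qed.

Lemma cdist_gate_eq0 (v : vertex) i j : chain_pair v = (i, j) ->
  cdist (n i) j ((n i).+1 %/ 2) = 0 -> j = (n i).+1 %/ 2.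
Proof.
have [i' [j' [-> im jn _]]] := chain_coords v; case=> <- <- /eqP.
rewrite (cdist_eq0 (half_pos im) (n_half im) jn) => [/eqP //|].
by rewrite gate_half //; have := n_half im; have := half_pos im; lia.
Qed.

Lemma dist_to_y (y : vertex) : chain_pair y = (m.-1, (n m.-1).+1 %/ 2) ->
  forall v, dist edge v y = pot_y (chain_pair v).
Proof.
move=> py; have gate_lt i : i < m -> (n i).+1 %/ 2 < n i.
  by move=> im; rewrite gate_half //; have := n_half im; have := half_pos im; lia.
have last_cycle i : i < m -> offset m - offset i.+1 = 0 -> i = m.-1.
  move=> im; have [lt|] := ltnP i.+1 m; last lia.
  by have := offset_mono lt; rewrite !offsetS; have := half_pos lt; lia.
apply: dist_potential => [|v|u w|v pos].
- by rewrite /= py /pot_y /cycle_pot /= prednK ?subnn /cdist; lia.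
- have [i [j [pv im _ _]]] := chain_coords v.
  rewrite /= pv /pot_y /cycle_pot /= => /eqP; rewrite addn_eq0 => /andP [/eqP top /eqP c0].
  by apply: chain_pair_inj; rewrite pv py (cdist_gate_eq0 pv c0) (last_cycle i im top).
- exact: (cycle_pot_lipschitz gate_lt pot_y_canon).
have [i [j [pv im _ _]]] := chain_coords v.
have [c0|c_pos] := posnP (cdist (n i) j ((n i).+1 %/ 2));
  last exact: (cycle_pot_descent gate_lt pot_y_canon pv).
(* [v] is the gate of cycle [i], which is not the last cycle: step into cycle [i + 1]. *)
have gate := cdist_gate_eq0 pv c0.
have lt : i.+1 < m.
  have [//|ge] := ltnP i.+1 m.
  by move: pos => /=; rewrite pv /pot_y /cycle_pot /= c0 (_ : i.+1 = m) ?subnn //; lia.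
have n3 := n_odd lt; have n_pos : (n i.+1).-1 < n i.+1 by lia.
have [w pw] := chain_vertex_canon lt n_pos.
exists w.
  rewrite (chain_edge_sym v w); apply: (chain_edge_at lt n_pos pw).
  by rewrite pv prednK ?modnn /chain_canon /= -?gate //; lia.
rewrite /= pw pot_y_canon // pv /pot_y /cycle_pot /= c0 gate_half //.
have := offset_mono lt; rewrite !offsetS; have := n_half lt; rewrite /cdist; lia.
Qed.

(* The vertices of cycle [i] other than its entry have [pot_x] in
   [offset i + 1, offset (i + 1)]: [pot_x] determines the cycle. *)
Lemma pot_x_range (v : vertex) i j : chain_pair v = (i, j) ->
  offset i + (0 < i) <= pot_x (i, j) <= offset i.+1.
Proof.
have [i' [j' [-> im jn nv]]] := chain_coords v; case=> <- <-.
have := cdist_le_half (half_pos im) (n_half im) jn (n_pos im).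
have := cdist_eq0 (half_pos im) (n_half im) jn (n_pos im).
by rewrite /pot_x /cycle_pot offsetS /=; move: nv; case: (posnP i') => _; lia.
Qed.

Lemma landmark_separation (u v : vertex) :
  pot_x (chain_pair u) = pot_x (chain_pair v) ->
  pot_y (chain_pair u) = pot_y (chain_pair v) -> u = v.
Proof.
have [i [j [pu im jn _]]] := chain_coords u; have [i' [j' [pv im' jn' _]]] := chain_coords v.
rewrite pu pv => ex ey.
have ii' : i = i'.
  have := pot_x_range pu; have := pot_x_range pv.
  by case: (ltngtP i i') => // lt; have := offset_mono lt; lia.
subst i'; apply: chain_pair_inj; rewrite pu pv; congr pair.
apply: (cdist_inj (half_pos im) (n_half im)) => //; move: ex ey;
  by rewrite /pot_x /pot_y /cycle_pot /= gate_half //; lia.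
Qed.

Lemma chain_resolving3 : has_resolving_partition edge 3.
Proof.
have m0 : 0 < m by lia.
have [x px] : exists x : vertex, chain_pair x = (0, 0).
  by apply: chain_vertex_at; rewrite /chain_valid /=; have := n_odd m0; lia.
have [y py] : exists y : vertex, chain_pair y = (m.-1, (n m.-1).+1 %/ 2).
  apply: chain_vertex_at; rewrite /chain_valid /= gate_half; try lia.
  by have := n_half (ltac:(lia) : m.-1 < m); have := half_pos (ltac:(lia) : m.-1 < m); lia.
have [z pz] : exists z : vertex, chain_pair z = (0, 1).
  by apply: chain_vertex_at; rewrite /chain_valid /=; have := n_odd m0; lia.
apply: (landmarks_resolving (x := x) (y := y) (z := z)).
- by apply/eqP => /(congr1 (@chain_pair m n)); rewrite px py => -[]; lia.
- by apply/eqP => /(congr1 (@chain_pair m n)); rewrite pz px.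
- by apply/eqP => /(congr1 (@chain_pair m n)); rewrite pz py => -[]; lia.
by move=> u v; rewrite !(dist_to_x px) !(dist_to_y py); apply: landmark_separation.
Qed.

Lemma canon0 j : canon 0 j = (0, j).
Proof. by rewrite /chain_canon andbF. Qed.

Lemma chain_cut_vertex : exists a : vertex, 3 < #|open_nbhd edge a|.
Proof.
have m0 : 0 < m by lia.
have [t0 t1] := (n_half m0, n_half m_ge2); have [h0 h1] := (half_pos m0, half_pos m_ge2).
have g0 := gate_half m0; set g := (n 0).+1 %/ 2 in g0 *.
have succ_g : g.+1 %% n 0 = if g.+1 == n 0 then 0 else g.+1 by rewrite succ_mod //; lia.
have [a pa] : exists a : vertex, chain_pair a = (0, g).
  by apply: chain_vertex_at; rewrite /chain_valid /=; lia.
have [b1 pb1] : exists b : vertex, chain_pair b = (0, half 0).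
  by apply: chain_vertex_at; rewrite /chain_valid /=; lia.
have [b2 pb2] : exists b : vertex, chain_pair b = (0, g.+1 %% n 0).
  by apply: chain_vertex_at; rewrite /chain_valid /= succ_g; case: ifP; lia.
have [b3 pb3] : exists b : vertex, chain_pair b = (1, 1).
  by apply: chain_vertex_at; rewrite /chain_valid /=; lia.
have [b4 pb4] : exists b : vertex, chain_pair b = (1, (n 1).-1).
  by apply: chain_vertex_at; rewrite /chain_valid /=; lia.
have distinct : uniq [:: a; b1; b2; b3; b4].
  apply: (map_uniq (f := @chain_pair m n)).
  by rewrite /= pa pb1 pb2 pb3 pb4 succ_g !inE !xpair_eqE; case: ifP; lia.
have adjacent b : b \in [:: b1; b2; b3; b4] -> edge a b.
  have n1 : (n 1).-1 < n 1 by lia.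
  rewrite !inE => /or4P [] /eqP ->.
  - rewrite chain_edge_sym; apply: (chain_edge_at m0 (_ : half 0 < n 0)); try lia.
      by rewrite pb1 canon0.
    by rewrite pa canon0 modn_small ?g0 //; lia.
  - by apply: (chain_edge_at m0 (_ : g < n 0)); rewrite ?pa ?pb2 ?canon0 //; lia.
  - apply: (chain_edge_at m_ge2 (_ : 0 < n 1)); try lia; first by rewrite pa.
    by rewrite pb3 modn_small //; lia.
  - rewrite chain_edge_sym; apply: (chain_edge_at m_ge2 n1); first by rewrite pb4 canon_id //; lia.
    by rewrite pa prednK ?modnn //; lia.
exists a; move: distinct => /andP [a_new uniq_b].
rewrite cardE; apply: (uniq_leq_size (s1 := [:: b1; b2; b3; b4])) => // b b_new.
rewrite mem_enum inE adjacent //=.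
by apply: contraNneq a_new => <-.
Qed.
End Chain.

Theorem theorem2p5 (m : nat) (n : nat -> nat) :
  2 <= m ->
  (forall i, i < m -> odd (n i) /\ 3 <= n i) ->
  partition_dimension_is (@chain_edge m n) 3.
Proof.
move=> m_ge2 n_odd.
have [a deg] := chain_cut_vertex m_ge2 n_odd.
have [b /andP [_ ba]] : exists b, b \in open_nbhd (@chain_edge m n) a.
  by apply/card_gt0P; apply: leq_ltn_trans deg.
split; first exact: chain_resolving3.
case=> [|[|[|//]]] _.
- exact: no_resolving_partition0 a.
- exact: no_resolving_partition1 ba.
- exact: no_resolving_partition2 (@chain_edge_sym m n) deg.
Qed.
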